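(* Assume $n>3t+2d$. In any execution of Algorithm 1, if a correct process $p_i$ mbrb-broadcasts $(m,sn)$ and $d<c-\sqrt{c\cdot\frac{n+t}{2}}$, then at least $c-d$ correct processes mbrb-deliver $(m,sn,i)$ at most three communication steps after the mbrb-broadcast.
   Context: System model. There are $n$ asynchronous processes $p_1,\dots,p_n$ with distinct known identities. Up to $t$ are Byzantine (arbitrary behavior); the rest are correct; $c$ is the number of correct processes in the execution, $n-t\le c\le n$. The network is fully connected, asynchronous, never corrupts/duplicates/creates messages; ''broadcast $M$'' sends $M$ to all $n$ processes; a message adversary may suppress, per broadcast by a correct process, up to $d$ ($0\le d<c$) copies addressed to correct processes, all other copies among correct processes being received. Signatures are unforgeable and public keys are known. Time is measured in communication steps: local computation takes zero time and every imp-message has the same transfer delay of one step. Algorithm 1 (code for $p_i$). Each process stores, for each triplet $(m,sn,j)$, a set of saved valid signatures of that triplet, at most one per signer. On $\mathrm{mbrb\_broadcast}(m,sn)$: $p_i$ saves its own signature of $(m,sn,i)$ and broadcasts $\mathrm{BUNDLE}(m,sn,i,S)$, $S$ the saved signatures for $(m,sn,i)$. On receiving $\mathrm{BUNDLE}(m,sn,j,sigs)$: if $p_i$ has not already mbrb-delivered some $(-,sn,j)$ and $sigs$ contains a valid signature of $(m,sn,j)$ by $p_j$, then: (1) save all new valid signatures of $(m,sn,j)$ in $sigs$; (2) if $p_i$ has not yet signed any $(-,sn,j)$, save its own signature of $(m,sn,j)$ and broadcast $\mathrm{BUNDLE}(m,sn,j,\text{all saved signatures for }(m,sn,j))$; (3)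 if strictly more than $\frac{n+t}{2}$ signatures for $(m,sn,j)$ are saved, broadcast $\mathrm{BUNDLE}(m,sn,j,\text{all saved signatures})$ and mbrb-deliver $(m,sn,j)$. *)

(* Model of Algorithm 1 (signature-bundle MBRB) executed under
   the timing assumption "every message takes exactly one communication step". *)
From HB Require Import structures.
From mathcomp Require Import all_boot all_order all_algebra.
Set Implicit Arguments.
Unset Strict Implicit.
Unset Printing Implicit Defensive.
Import Order.TTheory GRing.Theory Num.Theory.

Section Model.
Variables (n : nat) (M : eqType) (R : rcfType).

(* Signatures are unforgeable, so a set of
   valid signatures of the triplet (m,sn,j) is represented by the set of its
   signers (at most one signature per signer).  Invalid signatures / signatures
   of other triplets are ignored by the algorithm and are therefore not modeled. *)
Record bundle := Bundle { b_m : M; b_sn : nat; b_j : 'I_n; b_sigs : {set 'I_n} }.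

Record pstate := PState {
  saved  : M -> nat -> 'I_n -> {set 'I_n};
  signed : nat -> 'I_n -> bool;
  deliv  : nat -> 'I_n -> bool
}.

Definition init_state : pstate :=
  PState (fun _ _ _ => set0) (fun _ _ => false) (fun _ _ => false).

Definition upd_saved (st : pstate) m sn j (S : {set 'I_n}) : pstate :=
  PState (fun m' sn' j' => if [&& m' == m, sn' == sn & j' == j] then S
                           else saved st m' sn' j')
         (signed st) (deliv st).

Definition set_signed (st : pstate) sn j : pstate :=
  PState (saved st) (fun sn' j' => ((sn' == sn) && (j' == j)) || signed st sn' j')
         (deliv st).

Definition set_deliv (st : pstate) sn j : pstate :=
  PState (saved st) (signed st)
         (fun sn' j' => ((sn' == sn) && (j' == j)) || deliv st sn' j').

(* Result of a local step: new state, broadcast messages (in order), and the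
   triplet mbrb-delivered during the step (if any). *)
Definition step_result := (pstate * seq bundle * option (M * nat * 'I_n))%type.

Definition step_bcast (i : 'I_n) (st : pstate) (m : M) (sn : nat) : step_result :=
  let S := i |: saved st m sn i in
  (set_signed (upd_saved st m sn i S) sn i, [:: Bundle m sn i S], None).

Definition step_recv (t : nat) (i : 'I_n) (st : pstate) (b : bundle) : step_result :=
  let: Bundle m sn j sigs := b in
  if ~~ deliv st sn j && (j \in sigs) then
    let st1 := upd_saved st m sn j (saved st m sn j :|: sigs) in
    let p2 := if ~~ signed st1 sn j then
                let S2 := i |: saved st1 m sn j in
                (set_signed (upd_saved st1 m sn j S2) sn j, [:: Bundle m sn j S2])
              else (st1, [::]) in
    let st2 := p2.1 in
    let S3 := saved st2 m sn j in
    if (n + t < 2 * #|S3|)%N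
    then (set_deliv st2 sn j, p2.2 ++ [:: Bundle m sn j S3], Some (m, sn, j))
    else (st2, p2.2, None)
  else (st, [::], None).

(* Origin of a received message: the r-th message broadcast during the k-th
   event of the execution (a correct process), or a Byzantine process q. *)
Inductive source := FromCorrect (k r : nat) | FromByz (q : 'I_n).

Inductive input := InBcast (m : M) (sn : nat) | InRecv (src : source) (b : bundle).

Record event := Event { e_proc : 'I_n; e_time : R; e_in : input }.

Definition step (t : nat) (i : 'I_n) (st : pstate) (x : input) : step_result :=
  match x with
  | InBcast m sn => step_bcast i st m sn
  | InRecv _ b => step_recv t i st b
  end.

Definition state_before (t : nat) (ev : seq event) (p : 'I_n) (x : nat) : pstate :=
  foldl (fun st e => if e_proc e == p then (step t p st (e_in e)).1.1 else st)
        init_state (take x ev).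

Definition result_at (t : nat) (ev : seq event) (x : nat) : option step_result :=
  if onth ev x is Some e
  then Some (step t (e_proc e) (state_before t ev (e_proc e) x) (e_in e))
  else None.

Definition out_at t ev x : seq bundle :=
  if result_at t ev x is Some r then r.1.2 else [::].

Definition deliv_at t ev x : option (M * nat * 'I_n) :=
  if result_at t ev x is Some r then r.2 else None.

Definition receives (ev : seq event) (p : 'I_n) (k r : nat) : Prop :=
  exists x e b, onth ev x = Some e /\ e_proc e = p /\ e_in e = InRecv (FromCorrect k r) b.

(* Well-formed execution (prefix) of Algorithm 1, with Byzantine set B, message
   adversary power d, all messages between correct processes taking exactly one
   step, and every non-suppressed copy of every broadcast sent at time s with
   s + 1 <= T having been received. *)
Definition valid_exec (t d : nat) (B : {set 'I_n}) (ev : seq event) (T : R) : Prop :=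
  (forall x e, onth ev x = Some e -> e_proc e \notin B) /\
  (forall x y ex ey, (x < y)%N -> onth ev x = Some ex -> onth ev y = Some ey ->
     (e_time ex <= e_time ey)%R) /\
  (forall x e k r b, onth ev x = Some e -> e_in e = InRecv (FromCorrect k r) b ->
     (k < x)%N /\ exists ek, onth ev k = Some ek /\ onth (out_at t ev k) r = Some b /\
       e_time e = (e_time ek + 1)%R) /\
  (forall x y ex ey k r b b', onth ev x = Some ex -> onth ev y = Some ey ->
     e_proc ex = e_proc ey -> e_in ex = InRecv (FromCorrect k r) b ->
     e_in ey = InRecv (FromCorrect k r) b' -> x = y) /\
  (* messages from Byzantine processes: signatures are unforgeable, so a
     signature of a correct process s on (m,sn,j) can appear only once s has
     signed (m,sn,j) *)
  (forall x e q b, onth ev x = Some e -> e_in e = InRecv (FromByz q) b ->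
     q \in B /\ forall s, s \in b_sigs b -> s \notin B ->
       s \in saved (state_before t ev s x) (b_m b) (b_sn b) (b_j b)) /\
  (forall x y ex ey m m' sn, onth ev x = Some ex -> onth ev y = Some ey ->
     e_proc ex = e_proc ey -> e_in ex = InBcast m sn -> e_in ey = InBcast m' sn -> x = y) /\
  (* message adversary: per broadcast of a correct process, at most d copies to
     correct processes are suppressed (all others received, within one step) *)
  (forall k ek r b, onth ev k = Some ek -> onth (out_at t ev k) r = Some b ->
     (e_time ek + 1 <= T)%R ->
     exists P : {set 'I_n}, P \subset ~: B /\ (n - #|B| - d <= #|P|)%N /\
       forall p, p \in P -> receives ev p k r).

End Model.

From HB Require Import structures.
From mathcomp Require Import all_boot all_order all_algebra.
From mathcomp Require Import ring lra.
Import Order.TTheory GRing.Theory Num.Theory.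
Set Implicit Arguments.
Unset Strict Implicit.
Unset Printing Implicit Defensive.

(* Writing c for the number of correct processes, the bundle of p_i reaches at
   least c - d correct processes after one step; each of them signs and
   broadcasts, so after two steps at least c - d correct processes hold the
   signature of each of these c - d signers.  Double counting over the c correct
   receivers yields one of them holding at least (c - d)^2 / c signatures, which
   exceeds (n + t) / 2 exactly when d < c - sqrt(c (n + t) / 2); that process
   delivers and rebroadcasts its quorum of signatures, and the c - d correct
   processes receiving that bundle deliver at the third step. *)

Lemma card_sep_sum (T : finType) (A : {set T}) (P : pred T) :
  #|[set x in A | P x]| = \sum_(x in A) P x.
Proof. by rewrite -sum1dep_card big_mkcondr /=; apply: eq_bigr => x _; case: (P x). Qed.

Lemma double_counting_max (T : finType) (C P : {set T}) (Q : T -> {set T}) (a : nat) :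
    0 < a -> a <= #|P| -> (forall p, p \in P -> Q p \subset C /\ a <= #|Q p|) ->
  exists2 q, q \in C & a * a <= #|C| * #|[set p in P | q \in Q p]|.
Proof.
move=> a_gt0 aP hQ.
have sum_swap : \sum_(q in C) #|[set p in P | q \in Q p]| = \sum_(p in P) #|Q p|.
  under eq_bigr => q _ do rewrite card_sep_sum.
  rewrite exchange_big; apply: eq_bigr => p /hQ[/subsetP QC _].
  rewrite -card_sep_sum; apply: eq_card => q; rewrite inE.
  by case: (boolP (q \in Q p)) => [/QC ->|]; rewrite ?andbF.
have [p0 Pp0] : exists p0, p0 \in P.
  by apply/set0Pn; rewrite -card_gt0 (leq_trans a_gt0 aP).
have C_gt0 : 0 < #|C|.
  have [QC aQ] := hQ p0 Pp0.
  exact: leq_trans a_gt0 (leq_trans aQ (subset_leq_card QC)).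
have [q qC maxq] := eq_bigmax_cond (fun q => #|[set p in P | q \in Q p]|) C_gt0.
exists q => //; apply: (@leq_trans (\sum_(p in P) #|Q p|)).
  apply: (@leq_trans (#|P| * a)); first by rewrite leq_mul2r aP orbT.
  by rewrite -sum_nat_const; apply: leq_sum => p /hQ[].
by rewrite -sum_swap -maxq -sum_nat_const; apply: leq_sum => q' q'C; apply: leq_bigmax_cond.
Qed.

Section SqrtBound.
Local Open Scope ring_scope.

Lemma nat_bound_of_lt_sub_sqrt (R : rcfType) (c d k : nat) : (d < c)%N ->
  (d%:R : R) < c%:R - Num.sqrt (c%:R * (k%:R / 2%:R)) ->
  (c * k < 2 * ((c - d) * (c - d)))%N.
Proof.
move=> d_lt_c hlt; rewrite -(ltr_nat R) !natrM natrB ?(ltnW d_lt_c) //.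
set x := (c%:R * (k%:R / 2%:R) : R) in hlt.
have x_ge0 : 0 <= x by rewrite mulr_ge0 ?divr_ge0 ?ler0n.
have sqrt_lt : Num.sqrt x < c%:R - d%:R by lra.
have sqr_lt : x < (c%:R - d%:R) * (c%:R - d%:R).
  have diff_ge0 : 0 <= c%:R - d%:R :> R := le_trans (sqrtr_ge0 x) (ltW sqrt_lt).
  by rewrite -(sqr_sqrtr x_ge0) -!expr2 ltrXn2r // ?sqrtr_ge0 // diff_ge0.
have -> : (c%:R * k%:R : R) = 2%:R * x by rewrite /x; field.
by rewrite ltr_pM2l ?ltr0n.
Qed.

End SqrtBound.

Section Step.
Variables (n : nat) (M : eqType) (t : nat) (q : 'I_n).
Implicit Types (st : pstate n M) (sigs : {set 'I_n}).

Definition state_le (st st' : pstate n M) :=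
  [/\ forall m s j, saved st m s j \subset saved st' m s j,
      forall s j, signed st s j -> signed st' s j &
      forall s j, deliv st s j -> deliv st' s j].

Lemma state_le_refl st : state_le st st.
Proof. by split. Qed.

Lemma state_le_trans st1 st2 st3 :
  state_le st1 st2 -> state_le st2 st3 -> state_le st1 st3.
Proof.
move=> [S12 s12 d12] [S23 s23 d23]; split=> [m s j|s j /s12/s23|s j /d12/d23] //.
exact: subset_trans (S12 m s j) (S23 m s j).
Qed.

Lemma step_bcastE st m0 sn0 :
  let S := q |: saved st m0 sn0 q in
  let r := step t q st (InBcast n m0 sn0) in
  [/\ forall m s j, saved r.1.1 m s j =
        if [&& m == m0, s == sn0 & j == q] then S else saved st m s j,
      forall s j, signed r.1.1 s j = ((s == sn0) && (j == q)) || signed st s j,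
      forall s j, deliv r.1.1 s j = deliv st s j,
      r.1.2 = [:: Bundle m0 sn0 q S] & r.2 = None].
Proof. by []. Qed.

Lemma step_recv_rejectE st src m0 sn0 j0 sigs :
  ~~ (~~ deliv st sn0 j0 && (j0 \in sigs)) ->
  step t q st (InRecv src (Bundle m0 sn0 j0 sigs)) = (st, [::], None).
Proof. by rewrite /= /step_recv => /negbTE ->. Qed.

Lemma step_recv_acceptE st src m0 sn0 j0 sigs :
  ~~ deliv st sn0 j0 -> j0 \in sigs ->
  let S1 := saved st m0 sn0 j0 :|: sigs in
  let S2 := if signed st sn0 j0 then S1 else q |: S1 in
  let dl := (n + t < 2 * #|S2|)%N in
  let r := step t q st (InRecv src (Bundle m0 sn0 j0 sigs)) in
  [/\ forall m s j, saved r.1.1 m s j =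
        if [&& m == m0, s == sn0 & j == j0] then S2 else saved st m s j,
      forall s j, signed r.1.1 s j = ((s == sn0) && (j == j0)) || signed st s j,
      forall s j, deliv r.1.1 s j = [&& dl, s == sn0 & j == j0] || deliv st s j,
      r.1.2 = (if signed st sn0 j0 then [::] else [:: Bundle m0 sn0 j0 S2]) ++
              (if dl then [:: Bundle m0 sn0 j0 S2] else [::]) &
      r.2 = (if dl then Some (m0, sn0, j0) else None)].
Proof.
move=> hd hj S1 S2 dl r; rewrite /r /= /step_recv hd hj /= /dl /S2 /S1.
case hs: (signed st sn0 j0) => /=; rewrite !eqxx /=; case: ifP => hth /=.
all: split=> [m s j|s j|s j|//|//]; rewrite ?andbF ?andbT //.
all: try by case: ([&& m == m0, s == sn0 & j == j0]).
all: by case: (boolP ((s == sn0) && (j == j0))) => //= /andP [/eqP -> /eqP ->]; rewrite hs.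
Qed.

Lemma step_state_le st inp : state_le st (step t q st inp).1.1.
Proof.
case: inp => [m0 sn0 | src [m0 sn0 j0 sigs]].
  have [hS hs hd _ _] := step_bcastE st m0 sn0.
  split=> [m s j|s j|s j]; rewrite ?hS ?hs ?hd; last by [].
  - by case: ifP => // /and3P [/eqP-> /eqP-> /eqP->]; apply: subsetUr.
  - by move=> ->; rewrite orbT.
case: (boolP (~~ deliv st sn0 j0 && (j0 \in sigs))) => [/andP [hd hj]|hr]; last first.
  by rewrite step_recv_rejectE //; apply: state_le_refl.
have [hS hs hdl _ _] := step_recv_acceptE src m0 hd hj.
split=> [m s j|s j|s j]; rewrite ?hS ?hs ?hdl; try by move=> ->; rewrite orbT.
case: ifP => // /and3P [/eqP-> /eqP-> /eqP->].
case: (signed st sn0 j0); first exact: subsetUl.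
exact: subset_trans (subsetUl _ _) (subsetUr _ _).
Qed.

Lemma step_out_bundle st inp r b :
  onth (step t q st inp).1.2 r = Some b ->
  b_sigs b = saved (step t q st inp).1.1 (b_m b) (b_sn b) (b_j b) /\ b_j b \in b_sigs b.
Proof.
case: inp => [m0 sn0 | src [m0 sn0 j0 sigs]].
  have [hS _ _ -> _] := step_bcastE st m0 sn0.
  by move=> /onth1P [_ <-]; rewrite hS !eqxx /=; split=> //; apply: setU11.
case: (boolP (~~ deliv st sn0 j0 && (j0 \in sigs))) => [/andP [hd hj]|hr]; last first.
  by rewrite step_recv_rejectE ?onth0n.
have [hS _ _ -> _] := step_recv_acceptE src m0 hd hj.
set S2 := (if signed st sn0 j0 then saved st m0 sn0 j0 :|: sigs else _).
have hjS2 : j0 \in S2 by rewrite /S2; case: signed; rewrite ?in_setU1 in_setU hj ?orbT.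
move=> hb; have -> : b = Bundle m0 sn0 j0 S2.
  by move: hb; case: signed; case: ifP => _ /=;
    case: r => [|[|r]] /=; rewrite ?onth0n // => -[<-].
by rewrite /= hS !eqxx.
Qed.

Lemma step_saved_own_sig st inp m s j :
  j \in saved (step t q st inp).1.1 m s j ->
  [\/ j \in saved st m s j, inp = InBcast n m s /\ q = j |
      exists src sigs, inp = InRecv src (Bundle m s j sigs) /\ j \in sigs].
Proof.
case: inp => [m0 sn0 | src [m0 sn0 j0 sigs]].
  have [hS _ _ _ _] := step_bcastE st m0 sn0.
  by rewrite hS; case: ifP => [/and3P [/eqP-> /eqP-> /eqP->] _|_]; [apply: Or32 | apply: Or31].
case: (boolP (~~ deliv st sn0 j0 && (j0 \in sigs))) => [/andP [hd hj]|hr]; last first.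
  by rewrite step_recv_rejectE //; apply: Or31.
have [hS _ _ _ _] := step_recv_acceptE src m0 hd hj.
rewrite hS; case: ifP => [/and3P [/eqP-> /eqP-> /eqP->] _|_]; last exact: Or31.
by apply: Or33; exists src, sigs.
Qed.

Lemma step_signed_broadcast st inp s j :
  ~~ signed st s j -> signed (step t q st inp).1.1 s j ->
  exists r m' S, onth (step t q st inp).1.2 r = Some (Bundle m' s j S) /\ q \in S.
Proof.
move=> hns; case: inp => [m0 sn0 | src [m0 sn0 j0 sigs]].
  have [_ hs _ -> _] := step_bcastE st m0 sn0.
  rewrite hs (negbTE hns) orbF => /andP [/eqP -> /eqP ->].
  by exists 0, m0, (q |: saved st m0 sn0 q); split=> //; apply: setU11.
case: (boolP (~~ deliv st sn0 j0 && (j0 \in sigs))) => [/andP [hd hj]|hr]; last first.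
  by rewrite step_recv_rejectE // (negbTE hns).
have [_ hs _ -> _] := step_recv_acceptE src m0 hd hj.
rewrite hs (negbTE hns) orbF => /andP [/eqP E1 /eqP E2]; subst s j.
exists 0, m0, (q |: (saved st m0 sn0 j0 :|: sigs)); rewrite (negbTE hns) /=.
by split=> //; apply: setU11.
Qed.

Lemma step_deliv_new st inp s j :
  ~~ deliv st s j -> deliv (step t q st inp).1.1 s j ->
  exists m', (step t q st inp).2 = Some (m', s, j) /\
             j \in saved (step t q st inp).1.1 m' s j.
Proof.
move=> hnd; case: inp => [m0 sn0 | src [m0 sn0 j0 sigs]].
  by have [_ _ -> _ _] := step_bcastE st m0 sn0; rewrite (negbTE hnd).
case: (boolP (~~ deliv st sn0 j0 && (j0 \in sigs))) => [/andP [hd hj]|hr]; last first.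
  by rewrite step_recv_rejectE // (negbTE hnd).
have [hS _ hdl _ ->] := step_recv_acceptE src m0 hd hj.
rewrite hdl (negbTE hnd) orbF => /and3P [hth /eqP E1 /eqP E2]; subst s j.
exists m0; rewrite hth hS !eqxx; split=> //.
by case: signed; rewrite ?in_setU1 in_setU hj ?orbT.
Qed.

Lemma step_deliv_signed st inp :
  (forall s j, deliv st s j -> signed st s j) ->
  forall s j, deliv (step t q st inp).1.1 s j -> signed (step t q st inp).1.1 s j.
Proof.
move=> H; case: inp => [m0 sn0 | src [m0 sn0 j0 sigs]].
  have [_ hs hd _ _] := step_bcastE st m0 sn0.
  by move=> s j; rewrite hd hs => /H ->; rewrite orbT.
case: (boolP (~~ deliv st sn0 j0 && (j0 \in sigs))) => [/andP [hd hj]|hr]; last first.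
  by rewrite step_recv_rejectE.
have [_ hs hdl _ _] := step_recv_acceptE src m0 hd hj.
by move=> s j; rewrite hdl hs => /orP [/and3P [_ -> ->] //|/H ->]; rewrite orbT.
Qed.

Lemma step_accept st src m0 sn0 j0 sigs :
  ~~ deliv st sn0 j0 -> j0 \in sigs ->
  let st' := (step t q st (InRecv src (Bundle m0 sn0 j0 sigs))).1.1 in
  [/\ sigs \subset saved st' m0 sn0 j0, signed st' sn0 j0 &
      (n + t < 2 * #|saved st' m0 sn0 j0|)%N -> deliv st' sn0 j0].
Proof.
move=> hd hj st'; have [hS hs hdl _ _] := step_recv_acceptE src m0 hd hj.
rewrite /st' hS hs hdl !eqxx /=; split=> [||->] //.
case: signed; first exact: subsetUr.
exact: subset_trans (subsetUr _ _) (subsetUr _ _).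
Qed.

Lemma step_deliver_broadcast st inp m' s j :
  (step t q st inp).2 = Some (m', s, j) ->
  exists r S, onth (step t q st inp).1.2 r = Some (Bundle m' s j S) /\ (n + t < 2 * #|S|)%N.
Proof.
case: inp => [m0 sn0 | src [m0 sn0 j0 sigs]].
  by have [_ _ _ _ ->] := step_bcastE st m0 sn0.
case: (boolP (~~ deliv st sn0 j0 && (j0 \in sigs))) => [/andP [hd hj]|hr]; last first.
  by rewrite step_recv_rejectE.
have [_ _ _ -> ->] := step_recv_acceptE src m0 hd hj.
case: ifP => hth // [<- <- <-].
by case: (signed st sn0 j0) hth => /= hth; [exists 0 | exists 1]; eexists.
Qed.

End Step.

Section Execution.
Variables (n : nat) (M : eqType) (R : rcfType) (t : nat) (ev : seq (event n M R)).
Local Notation sb := (state_before t ev).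

Lemma state_before0 p : sb p 0 = init_state n M.
Proof. by rewrite /state_before take0. Qed.

Lemma state_beforeS p x :
  sb p x.+1 = if onth ev x is Some e then
                if e_proc e == p then (step t p (sb p x) (e_in e)).1.1 else sb p x
              else sb p x.
Proof.
rewrite /state_before; case h: (onth ev x) => [e|].
  have hx : x < size ev by rewrite -onthTE h.
  by rewrite (take_nth e hx) foldl_rcons (@onth_nth _ e e ev x h).
have hx : size ev <= x by rewrite -onthNE h.
by rewrite !take_oversize // (leq_trans hx).
Qed.

Lemma state_before_event x e :
  onth ev x = Some e -> sb (e_proc e) x.+1 = (step t (e_proc e) (sb (e_proc e) x) (e_in e)).1.1.
Proof. by move=> h; rewrite state_beforeS h eqxx. Qed.

Lemma out_atE x e :
  onth ev x = Some e -> out_at t ev x = (step t (e_proc e) (sb (e_proc e) x) (e_in e)).1.2.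
Proof. by rewrite /out_at /result_at => ->. Qed.

Lemma deliv_atE x e :
  onth ev x = Some e -> deliv_at t ev x = (step t (e_proc e) (sb (e_proc e) x) (e_in e)).2.
Proof. by rewrite /deliv_at /result_at => ->. Qed.

Lemma state_before_le p x y : x <= y -> state_le (sb p x) (sb p y).
Proof.
move/subnK <-; elim: (y - x) => [|k IH]; first exact: state_le_refl.
apply: state_le_trans IH _; rewrite addSn state_beforeS.
case: (onth ev (k + x)) => [e|]; last exact: state_le_refl.
by case: eqP => _; [apply: step_state_le | apply: state_le_refl].
Qed.

Lemma deliv_signed p x s j : deliv (sb p x) s j -> signed (sb p x) s j.
Proof.
elim: x s j => [|x IH]; first by rewrite state_before0.
rewrite state_beforeS; case: (onth ev x) => [e|] //; case: eqP => _ //.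
exact: step_deliv_signed.
Qed.

(* The last clause holds even if q had already delivered: delivery is stable. *)
Lemma recv_bundle_effect y e q src m sn j S :
  onth ev y = Some e -> e_proc e = q -> e_in e = InRecv src (Bundle m sn j S) -> j \in S ->
  [/\ signed (sb q y.+1) sn j,
      ~~ deliv (sb q y) sn j -> S \subset saved (sb q y.+1) m sn j &
      (n + t < 2 * #|saved (sb q y.+1) m sn j|)%N -> deliv (sb q y.+1) sn j].
Proof.
move=> hy <- hin hj; rewrite (state_before_event hy) hin.
have [_ mono_signed mono_deliv] := step_state_le t (e_proc e) (sb (e_proc e) y)
                                     (InRecv src (Bundle m sn j S)).
case hd: (deliv (sb (e_proc e) y) sn j).
  by split=> [|//|_]; [apply/mono_signed/deliv_signed | apply: mono_deliv].
by have [] := step_accept t (e_proc e) src m (negbT hd) hj.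
Qed.

End Execution.

Section Broadcast.
Variables (n : nat) (M : eqType) (R : rcfType) (t d : nat) (B : {set 'I_n}).
Variables (ev : seq (event n M R)) (T : R) (i : 'I_n) (m : M) (sn x0 : nat) (tau0 : R).
Hypothesis valid : valid_exec t d B ev T.
Hypothesis bcast : onth ev x0 = Some (Event i tau0 (InBcast n m sn)).
Local Notation sb := (state_before t ev).

Definition quorum (P : {set 'I_n}) := P \subset ~: B /\ (n - #|B| - d <= #|P|)%N.

Definition delivers_by (p : 'I_n) (tau : R) :=
  exists x e, onth ev x = Some e /\ e_proc e = p /\ (e_time e <= tau)%R /\
    deliv_at t ev x = Some (m, sn, i).

Definition receives_signature_by (q s : 'I_n) (tau : R) :=
  exists y e src S, onth ev y = Some e /\ e_proc e = q /\ (e_time e <= tau)%R /\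
    e_in e = InRecv src (Bundle m sn i S) /\ i \in S /\ s \in S.

Lemma event_time_le z y ez ey :
  z <= y -> onth ev z = Some ez -> onth ev y = Some ey -> (e_time ez <= e_time ey)%R.
Proof.
have [_ [chrono _]] := valid.
rewrite leq_eqVlt => /orP [/eqP->|hlt] hz hy; last exact: chrono hlt hz hy.
by move: hz; rewrite hy => -[->].
Qed.

Lemma bundle_reaches_quorum k ek r b :
  onth ev k = Some ek -> onth (out_at t ev k) r = Some b -> (e_time ek + 1 <= T)%R ->
  exists2 P, quorum P & forall p, p \in P -> exists y e src,
    [/\ onth ev y = Some e, e_proc e = p, e_in e = InRecv src b & e_time e = (e_time ek + 1)%R].
Proof.
have [_ [_ [origin [_ [_ [_ adversary]]]]]] := valid.
move=> hk hout hT; have [P [PB [Pc Precv]]] := adversary _ _ _ _ hk hout hT.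
exists P => // p /Precv [y [e [b' [hy [hp hin]]]]].
have [_ [ek' [hk' [hout' htime]]]] := origin _ _ _ _ _ hy hin.
move: hk' hout' htime hin; rewrite hk hout => -[<-] [<-] htime hin.
by exists y, e, (FromCorrect n k r).
Qed.

(* Any saved copy of p_i's signature was saved earlier by a correct process
   (its sender, or its signer when it comes from a Byzantine one), back to the
   single broadcast of p_i with sequence number sn. *)
Lemma own_signature_msg x p m' : i \in saved (sb p x) m' sn i -> m' = m.
Proof.
have [correct [_ [origin [_ [byz [once _]]]]]] := valid.
elim: x {-2}x (leqnn x) p => [|x IH] y.
  by rewrite leqn0 => /eqP-> p; rewrite state_before0 inE.
rewrite leq_eqVlt => /orP [/eqP->|]; last exact: IH.
move=> p; rewrite state_beforeS; case h: (onth ev x) => [e|]; last exact: IH.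
case: eqP => [hp|_]; last exact: IH.
case/step_saved_own_sig => [|[hin hq]|[[k r|b] [sigs [hin hi]]]]; first exact: IH.
- have hpr : e_proc e = e_proc (Event i tau0 (InBcast n m sn)) by rewrite hp hq.
  have x_eq := once _ _ _ _ _ _ _ h bcast hpr hin erefl.
  move: h; rewrite x_eq bcast => -[E].
  by move: hin; rewrite -E => -[].
- have [hk [ek [hek [hout _]]]] := origin _ _ _ _ _ h hin.
  rewrite (out_atE t hek) in hout; have [hsig _] := step_out_bundle hout.
  rewrite /= -(state_before_event t hek) in hsig.
  by apply: (IH k.+1 hk (e_proc ek)); rewrite -hsig.
- have [_ honest] := byz _ _ _ _ h hin.
  exact: (IH x (leqnn x) i (honest i hi (correct _ _ bcast))).
Qed.

Lemma delivery_event x p : deliv (sb p x) sn i ->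
  exists z e, [/\ z < x, onth ev z = Some e, e_proc e = p & deliv_at t ev z = Some (m, sn, i)].
Proof.
elim: x p => [|x IH] p; first by rewrite state_before0.
case hd: (deliv (sb p x) sn i).
  by move=> _; have [z [e [hz He]]] := IH p hd; exists z, e; split=> //; apply: ltnW.
rewrite state_beforeS; case h: (onth ev x) => [e|]; last by rewrite hd.
case: eqP => [hp|_]; last by rewrite hd.
case/(step_deliv_new (negbT hd)) => m' [hres hin].
rewrite -hp -(state_before_event t h) in hin.
move: hres; rewrite (own_signature_msg hin) => hres.
by exists x, e; split=> //; rewrite (deliv_atE t h) hp.
Qed.

Lemma signing_event x p : signed (sb p x) sn i ->
  exists z e r S, [/\ z < x, onth ev z = Some e, e_proc e = p,
    onth (out_at t ev z) r = Some (Bundle m sn i S) & p \in S /\ i \in S].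
Proof.
elim: x p => [|x IH] p; first by rewrite state_before0.
case hs: (signed (sb p x) sn i).
  move=> _; have [z [e [r [S [hz He]]]]] := IH p hs.
  by exists z, e, r, S; split=> //; apply: ltnW.
rewrite state_beforeS; case h: (onth ev x) => [e|]; last by rewrite hs.
case: eqP => [hp|_]; last by rewrite hs.
case/(step_signed_broadcast (negbT hs)) => r [m' [S [hout hpS]]].
have [hsig hiS] := step_out_bundle hout.
rewrite /= -hp -(state_before_event t h) hp in hsig hiS.
have Em : m' = m by apply: (own_signature_msg (x := x.+1) (p := p)); rewrite -hsig.
subst m'; exists x, e, r, S; split=> //.
by rewrite (out_atE t h) hp.
Qed.

(* The delivery is triggered by the latest of the receptions. *)
Lemma quorum_receipt_delivers q (P : {set 'I_n}) tau :
  (forall s, s \in P -> receives_signature_by q s tau) -> (n + t < 2 * #|P|)%N ->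
  delivers_by q tau.
Proof.
move=> recv big.
have /fin_all_exists [yf hyf] s : exists y, s \in P -> exists e src S,
    [/\ onth ev y = Some e, e_proc e = q, (e_time e <= tau)%R,
        e_in e = InRecv src (Bundle m sn i S) & i \in S /\ s \in S].
  case: (boolP (s \in P)) => [/recv|_]; last by exists 0.
  by case=> y [e [src [S [? [? [? [? [? ?]]]]]]]]; exists y => _; exists e, src, S.
have P_gt0 : 0 < #|P| by move: big; rewrite lt0n; apply: contraTneq => ->.
have [s0 Ps0 Ymax] := eq_bigmax_cond yf P_gt0.
set Y := \max_(s in P) yf s in Ymax.
have [eY [srcY [SY [hY hqY htY hinY [hiY _]]]]] := hyf s0 Ps0.
rewrite -Ymax in hY.
have delivered : deliv (sb q Y.+1) sn i.
  have [_ _ threshold] := recv_bundle_effect t hY hqY hinY hiY.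
  case hd: (deliv (sb q Y) sn i).
    by have [_ _] := state_before_le t ev q (leqnSn Y); apply.
  apply/threshold/(leq_trans big); rewrite leq_mul2l subset_leq_card ?orbT //.
  apply/subsetP => s Ps.
  have ys_le : yf s <= Y := leq_bigmax_cond s Ps.
  have [e [src [S [hy hq _ hin [hi hs]]]]] := hyf s Ps.
  have [_ accept _] := recv_bundle_effect t hy hq hin hi.
  have not_yet : ~~ deliv (sb q (yf s)) sn i.
    apply: contraFN hd; have [_ _] := state_before_le t ev q ys_le; apply.
  have [sub _ _] := state_before_le t ev q (ys_le : (yf s).+1 <= Y.+1).
  exact: subsetP (sub _ _ _) _ (subsetP (accept not_yet) _ hs).
have [z [ez [hz hez hqz hdz]]] := delivery_event delivered.
exists z, ez; split=> //; split=> //; split=> //.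
exact: le_trans (event_time_le (hz : z <= Y) hez hY) htY.
Qed.

Lemma signer_quorum_receives y e p tau :
  onth ev y = Some e -> e_proc e = p -> signed (sb p y.+1) sn i ->
  (e_time e <= tau)%R -> (tau + 1 <= T)%R ->
  exists2 Q, quorum Q & forall q, q \in Q -> receives_signature_by q p (tau + 1).
Proof.
move=> hy hp hsig hte hT.
have [z [ez [r [S [hz hez _ hout [hpS hiS]]]]]] := signing_event hsig.
have htz : (e_time ez <= tau)%R := le_trans (event_time_le (hz : z <= y) hez hy) hte.
have hTz : (e_time ez + 1 <= T)%R by apply: le_trans hT; rewrite lerD2r.
have [Q qQ hQ] := bundle_reaches_quorum hez hout hTz.
exists Q => // q /hQ [y' [e' [src [hy' hq' hin' ht']]]].
by exists y', e', src, S; rewrite ht' lerD2r.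
Qed.

Lemma deliverer_quorum_delivers q tau :
  delivers_by q tau -> (tau + 1 <= T)%R ->
  exists2 P, quorum P & forall p, p \in P -> delivers_by p (tau + 1).
Proof.
move=> [z [ez [hz [_ [htz hdz]]]]] hT.
rewrite (deliv_atE t hz) in hdz.
have [r [S [hout big]]] := step_deliver_broadcast hdz.
have [_ hiS] := step_out_bundle hout.
rewrite -(out_atE t hz) in hout.
have hTz : (e_time ez + 1 <= T)%R by apply: le_trans hT; rewrite lerD2r.
have [P qP hP] := bundle_reaches_quorum hz hout hTz.
exists P => // p /hP [y [e [src [hy hp hin ht]]]].
apply: (quorum_receipt_delivers (P := S)) => // s hs.
by exists y, e, src, S; rewrite ht lerD2r.
Qed.

End Broadcast.

Theorem mainTheorem9 (R : rcfType) (M : eqType) (n t d : nat) (B : {set 'I_n})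
    (ev : seq (event n M R)) (T : R) (i : 'I_n) (m : M) (sn x0 : nat) (tau0 : R) :
  (#|B| <= t)%N ->
  (d < n - #|B|)%N ->
  (3 * t + 2 * d < n)%N ->
  valid_exec t d B ev T ->
  onth ev x0 = Some (Event i tau0 (InBcast n m sn)) ->
  ((d%:R : R) < (n - #|B|)%:R - Num.sqrt ((n - #|B|)%:R * ((n + t)%:R / 2%:R)))%R ->
  (tau0 + 3%:R <= T)%R ->
  exists P : {set 'I_n}, P \subset ~: B /\ (n - #|B| - d <= #|P|)%N /\
    forall p, p \in P -> exists x e, onth ev x = Some e /\ e_proc e = p /\
      (e_time e <= tau0 + 3%:R)%R /\ deliv_at t ev x = Some (m, sn, i).
Proof.
move=> _ d_lt_c _ valid bcast hsqrt hT.
have [hT1 hT2 hT3] : [/\ tau0 + 1 <= T, tau0 + 1 + 1 <= T & tau0 + 1 + 1 + 1 <= T]%R.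
  by split; lra.
have out0 : onth (out_at t ev x0) 0 =
            Some (Bundle m sn i (i |: saved (state_before t ev i x0) m sn i)).
  by rewrite (out_atE t bcast).
have [P1 [_ P1c] recv1] := bundle_reaches_quorum valid bcast out0 hT1.
have /fin_all_exists [Q hQ] p : exists Q, p \in P1 -> quorum d B Q /\
    forall q, q \in Q -> receives_signature_by ev i m sn q p (tau0 + 1 + 1).
  case: (boolP (p \in P1)) => [/recv1 [y [e [src [hy hp hin hte]]]]|_]; last by exists set0.
  have [signed_p _ _] := recv_bundle_effect t hy hp hin (setU11 _ _).
  have hte' : (e_time e <= tau0 + 1)%R by rewrite hte.
  have [Q ? ?] := signer_quorum_receives valid bcast hy hp signed_p hte' hT2.
  by exists Q.
have cB : #|~: B| = n - #|B| by rewrite cardsCs setCK card_ord.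
have a_gt0 : (0 < n - #|B| - d)%N by rewrite subn_gt0.
have [q _ many] := double_counting_max (C := ~: B) a_gt0 P1c
                     (fun p hp => (hQ p hp).1).
rewrite cB in many.
have quorum_q : (n + t < 2 * #|[set p in P1 | q \in Q p]|)%N.
  rewrite -(ltn_pmul2l (leq_ltn_trans (leq0n d) d_lt_c)).
  apply: leq_trans (nat_bound_of_lt_sub_sqrt d_lt_c hsqrt) _.
  by rewrite [X in _ <= X]mulnCA leq_mul2l many orbT.
have delivered : delivers_by t ev i m sn q (tau0 + 1 + 1).
  apply: (quorum_receipt_delivers valid bcast _ quorum_q) => s.
  by rewrite inE => /andP [sP1 qQs]; apply: (hQ s sP1).2.
have [P3 [P3B P3c] del3] := deliverer_quorum_delivers valid bcast delivered hT3.
have e3 : (tau0 + 1 + 1 + 1 = tau0 + 3%:R :> R)%R by lra.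
rewrite e3 in del3.
by exists P3; split; [|split].
Qed.
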